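(* The Hilbert spaces $H_N^{\mathrm{sip}}=L^2(\frac1N\mathbb Z,\nu_{\gamma,N})$ converge to $H^{\mathrm{sbm}}=L^2(\mathbb R,\bar\nu)$ in the following sense: with the dense subset $C=\{f+\lambda\mathbf 1_{\{0\}}:f\in C_c^\infty(\mathbb R),\lambda\in\mathbb R\}\subset H^{\mathrm{sbm}}$ and the linear maps $\Phi_N:C\to H_N^{\mathrm{sip}}$, $\Phi_Nf=f|_{\frac1N\mathbb Z}$, one has $\lim_{N\to\infty}\|\Phi_Nf\|_{H_N^{\mathrm{sip}}}=\|f\|_{H^{\mathrm{sbm}}}$ for all $f\in C$.
   Context: $\gamma>0$; $\mu_N$ gives mass $\frac1N$ to each point of $\frac1N\mathbb Z$; $\nu_{\gamma,N}=\mu_N+\sqrt2\gamma\delta_0$; $\bar\nu=dx+\sqrt2\gamma\delta_0$ on $\mathbb R$. *)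

From HB Require Import structures.
From mathcomp Require Import all_boot all_order all_algebra.
From mathcomp Require Import all_classical all_reals all_analysis.
Set Implicit Arguments. Unset Strict Implicit. Unset Printing Implicit Defensive.
Import Order.TTheory GRing.Theory Num.Theory.
Import numFieldNormedType.Exports.
Local Open Scope classical_set_scope.
Local Open Scope ring_scope.

Definition smooth (R : realType) (f : R -> R) : Prop :=
  forall (n : nat) (x : R), derivable (derive1n n f) x 1.

Definition compact_support (R : realType) (f : R -> R) : Prop :=
  exists M : R, forall x : R, M < `|x| -> f x = 0.

Definition in_C (R : realType) (f : R -> R) : Prop :=
  exists (g : R -> R) (lam : R),
    smooth g /\ compact_support g /\ f = (fun x => g x + lam * \1_[set 0] x).

(* Squared norm in H_N^sip = L^2((1/N)Z, mu_N + sqrt2 gamma delta_0) of Phi_N f = f|_{(1/N)Z}: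
   sum_{k in Z} (1/N) f(k/N)^2 + sqrt2 gamma f(0)^2  (as an extended real). *)
Definition sq_norm_sip (R : realType) (gamma : R) (N : nat) (f : R -> R) : \bar R :=
  ((\esum_(k in [set: int]) ((N%:R)^-1 * (f (k%:~R / N%:R)) ^+ 2)%:E)
   + (Num.sqrt 2 * gamma * (f 0) ^+ 2)%:E)%E.

Definition norm_sip (R : realType) (gamma : R) (N : nat) (f : R -> R) : R :=
  Num.sqrt (fine (sq_norm_sip gamma N f)).

(* Squared norm in H^sbm = L^2(R, dx + sqrt2 gamma delta_0):
   int_R f^2 dx + sqrt2 gamma f(0)^2 *)
Definition sq_norm_sbm (R : realType) (gamma : R) (f : R -> R) : \bar R :=
  ((\int[@lebesgue_measure R]_(x in [set: R]) ((f x) ^+ 2)%:E)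
   + (Num.sqrt 2 * gamma * (f 0) ^+ 2)%:E)%E.

Definition norm_sbm (R : realType) (gamma : R) (f : R -> R) : R :=
  Num.sqrt (fine (sq_norm_sbm gamma f)).

From HB Require Import structures.
From mathcomp Require Import all_boot all_order all_algebra.
From mathcomp Require Import all_classical all_reals all_analysis.
From mathcomp Require Import ring lra zify.
Import Order.TTheory GRing.Theory Num.Theory.
Import numFieldNormedType.Exports.
Local Open Scope classical_set_scope.
Local Open Scope ring_scope.

(* The function f agrees with a compactly supported smooth g except at 0.
   Lebesgue measure does not see the point 0, so the limit norm squared is
   int g^2 + sqrt2 gamma f(0)^2, whereas on the lattice the point 0 carries mass
   1/N, so the squared norm of Phi_N f is the Riemann sum (1/N) sum_k g(k/N)^2
   plus (f(0)^2 - g(0)^2)/N plus sqrt2 gamma f(0)^2.  Riemann sums of the C^1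
   compactly supported function g^2 converge with error O(1/N): on each cell
   [y, y + 1/N] two applications of the mean value theorem to a primitive G of
   g^2 give |G(y + 1/N) - G(y) - g(y)^2/N| <= sup |(g^2)'| / N^2. *)

Section RealFunctions.
Context {R : realType}.

Lemma derivable1_continuous (f : R -> R) x :
  derivable f x 1 -> {for x, continuous f}.
Proof. by move=> /derivable1_diffP /differentiable_continuous. Qed.

Lemma is_derive_continuous {f df : R -> R} :
  (forall x : R, is_derive x 1 f (df x)) -> continuous f.
Proof. by move=> fd x; apply: derivable1_continuous; case: (fd x). Qed.

Lemma continuous_bounded_itv (f : R -> R) (a b : R) : continuous f ->
  exists K, forall x, a <= x <= b -> `|f x| <= K.
Proof.
move=> fc; have [ab|ba] := lerP a b; last first.
  by exists 0 => x /andP[ax xb]; move: (le_trans ax xb); rewrite leNgt ba.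
have nfc : continuous (fun x => `|f x|).
  by move=> x; apply: continuous_comp; [exact: fc | exact: norm_continuous].
have [c _ Hc] := EVT_max ab (continuous_subspaceT nfc).
by exists `|f c| => x xab; apply: Hc; rewrite in_itv.
Qed.

Lemma primitive_taylor1_bound (G h h' : R -> R) (K y z : R) : y <= z ->
  (forall x, y <= x <= z -> is_derive x 1 G (h x)) ->
  (forall x, y <= x <= z -> is_derive x 1 h (h' x)) ->
  (forall x, y <= x <= z -> `|h' x| <= K) ->
  `|G z - G y - (z - y) * h y| <= K * (z - y) ^+ 2.
Proof.
move=> yz dG dh hK; case: (ltrP y z) => [{}yz|zy]; last first.
  have -> : z = y by apply/eqP; rewrite eq_le zy yz.
  by rewrite !subrr mul0r subr0 normr0 expr0n mulr0.
have within_yz x : x \in `]y, z[ -> y <= x <= z.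
  by rewrite in_itv /= => /andP[? ?]; apply/andP; split; exact: ltW.
have continuous_within (f df : R -> R) :
    (forall x, y <= x <= z -> is_derive x 1 f (df x)) ->
    {within `[y, z], continuous f}.
  move=> fd; apply: derivable_within_continuous => x.
  by rewrite in_itv /= => /fd [].
have [c cyz Gc] : exists2 c, c \in `]y, z[ & G z - G y = h c * (z - y).
  by apply: MVT yz _ (continuous_within _ _ dG) => x xyz; apply/dG/within_yz.
move: cyz; rewrite in_itv /= => /andP[yc cz].
have [d dyc hdc] : exists2 d, d \in `[y, c] & h c - h y = h' d * (c - y).
  apply: MVT_segment (ltW yc) _ _.
    by move=> x; rewrite in_itv /= => /andP[? ?]; apply: dh; apply/andP; split; lra.
  apply: derivable_within_continuous => x; rewrite in_itv /= => /andP[? ?].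
  by case: (dh x) => //; apply/andP; split; lra.
move: dyc; rewrite in_itv /= => /andP[yd dc].
have Kd : `|h' d| <= K by apply: hK; apply/andP; split; lra.
have -> : G z - G y - (z - y) * h y = h' d * (c - y) * (z - y).
  by rewrite Gc -hdc; ring.
have cy0 : 0 <= c - y by lra.
have zy0 : 0 <= z - y by lra.
rewrite !normrM (ger0_norm cy0) (ger0_norm zy0) expr2 mulrA.
apply: ler_pM => //; first exact: mulr_ge0.
by apply: ler_pM => //; lra.
Qed.

End RealFunctions.

(* For i < 2 L N these are the points of (1/N)Z in [-L, L). *)
Definition grid_point {R : realType} (L N i : nat) : R := i%:R / N%:R - L%:R.

Definition riemann_sum {R : realType} (L N : nat) (h : R -> R) : R :=
  \sum_(i < (2 * L * N)%N) N%:R^-1 * h (grid_point L N i).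

Section GridPoint.
Context {R : realType} (L N : nat).
Hypothesis N_gt0 : (0 < N)%N.

Let N_gt0R : 0 < N%:R :> R. Proof. by rewrite ltr0n. Qed.

Lemma grid_pointS i : grid_point L N i.+1 - grid_point L N i = N%:R^-1 :> R.
Proof. by rewrite /grid_point -natr1 mulrDl; field; rewrite gt_eqF. Qed.

Lemma grid_point0 : grid_point L N 0 = - L%:R :> R.
Proof. by rewrite /grid_point mul0r sub0r. Qed.

Lemma grid_point_last : grid_point L N (2 * L * N)%N = L%:R :> R.
Proof. by rewrite /grid_point natrM mulfK ?gt_eqF // natrM; lra. Qed.

Lemma grid_point_ge i : - L%:R <= grid_point L N i :> R.
Proof. by rewrite /grid_point lerBrDr addNr divr_ge0. Qed.

Lemma grid_point_le i : (i <= 2 * L * N)%N -> grid_point L N i <= L%:R :> R.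
Proof.
move=> iN; rewrite /grid_point lerBlDr ler_pdivrMr // -natrD -natrM ler_nat.
lia.
Qed.

End GridPoint.

Lemma riemann_sum_error {R : realType} {G h h' : R -> R} {K : R} (L N : nat) :
  (0 < N)%N ->
  (forall x : R, - L%:R <= x <= L%:R -> is_derive x 1 G (h x)) ->
  (forall x : R, - L%:R <= x <= L%:R -> is_derive x 1 h (h' x)) ->
  (forall x : R, - L%:R <= x <= L%:R -> `|h' x| <= K) ->
  `|G L%:R - G (- L%:R) - riemann_sum L N h| <= 2 * L%:R * K / N%:R.
Proof.
move=> N_gt0 dG dh hK; set p : nat -> R := grid_point L N.
have telescope : G L%:R - G (- L%:R) = \sum_(i < (2 * L * N)%N) (G (p i.+1) - G (p i)).
  rewrite -(big_mkord xpredT (fun i => G (p i.+1) - G (p i))).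
  by rewrite (telescope_sumr (fun i => G (p i))) // /p grid_point_last // grid_point0.
rewrite telescope /riemann_sum -sumrB.
apply: (le_trans (ler_norm_sum _ _ _)).
apply: (@le_trans _ _ (\sum_(i < (2 * L * N)%N) K * N%:R^-1 ^+ 2)).
  apply: ler_sum => i _; rewrite -(grid_pointS L N N_gt0 i : p i.+1 - p i = _).
  have within_L z : p i <= z <= p i.+1 -> - L%:R <= z <= L%:R.
    move=> /andP[iz zi]; apply/andP; split.
      exact: le_trans (grid_point_ge _ _ _) iz.
    exact: le_trans zi (grid_point_le _ _ N_gt0 _ (ltn_ord i)).
  apply: primitive_taylor1_bound.
  - by rewrite -subr_ge0 grid_pointS // invr_ge0 ler0n.
  - by move=> z /within_L; exact: dG.
  - by move=> z /within_L; exact: dh.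
  - by move=> z /within_L; exact: hK.
rewrite sumr_const card_ord -[X in X <= _]mulr_natr !natrM.
by rewrite le_eqVlt; apply/orP; left; apply/eqP; field; rewrite pnatr_eq0 -lt0n.
Qed.

Section CompactlySupportedC1.
Context {R : realType} {h h' : R -> R} {L : nat}.
Hypothesis h_is_derive : forall x : R, is_derive x 1 h (h' x).
Hypothesis h'_continuous : continuous h'.
Hypothesis h_eq0 : forall x : R, L%:R <= `|x| -> h x = 0.

Local Notation mu := (@lebesgue_measure R).

Let h_continuous : continuous h. Proof. exact: is_derive_continuous. Qed.

(* Based strictly left of -L, so that FTC applies on all of [-L, L]. *)
Let G (x : R) : R := Rintegral mu `[- L%:R - 1, x] h.

Let h_integrable (a b : R) : mu.-integrable `[a, b] (EFin \o h).
Proof.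
apply: continuous_compact_integrable; first exact: segment_compact.
exact: continuous_subspaceT.
Qed.

Let G_is_derive (x : R) : - L%:R <= x <= L%:R -> is_derive x 1 G (h x).
Proof.
move=> /andP[Lx xL].
have L0 := ler0n R L.
have xb : x < L%:R + 1 by lra.
have ax : - L%:R - 1 < x by lra.
have [dG G'] := continuous_FTC1_closed xb (h_integrable _ _) ax (h_continuous x).
apply: DeriveDef; first exact: dG.
by rewrite -derive1E.
Qed.

Let G_left : G (- L%:R) = 0.
Proof.
rewrite /G /Rintegral integral0_eq //= => x; rewrite in_itv /= => /andP[_ xL].
have L0 := ler0n R L.
by rewrite h_eq0 // ler0_norm; lra.
Qed.

Let integral_G : (\int[mu]_(x in [set: R]) (h x)%:E)%E = (G L%:R)%:E.
Proof.
rewrite /G /Rintegral fineK; last exact: integrable_fin_num (h_integrable _ _).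
rewrite [in RHS]integral_mkcond; apply: eq_integral => x _.
rewrite patchE; case: ifPn => // /negP; rewrite inE /= in_itv /= => /negP.
have := ler0n R L; rewrite negb_and -!ltNge => L0 /orP[xl|Lx]; rewrite h_eq0 //.
  by rewrite ler0_norm; lra.
by rewrite ger0_norm; lra.
Qed.

Lemma integralT_Rintegral :
  (\int[mu]_(x in [set: R]) (h x)%:E)%E = (Rintegral mu [set: R] h)%:E.
Proof. by rewrite /Rintegral integral_G. Qed.

Lemma riemann_sum_cvg :
  (fun N : nat => riemann_sum L N h) @ \oo --> Rintegral mu [set: R] h.
Proof.
rewrite /Rintegral integral_G /= -[G L%:R]subr0 -G_left.
have [K h'_le] := continuous_bounded_itv h' (- L%:R) L%:R h'_continuous.
apply/cvgrPdist_le => e e_gt0; near=> N.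
have N_gt0 : (0 < N)%N by near: N; exact: nbhs_infty_gt.
have NK : 2 * L%:R * K / e <= N%:R by near: N; exact: nbhs_infty_ger.
have h_is_derive_L x (_ : - L%:R <= x <= L%:R) := h_is_derive x.
apply: le_trans (riemann_sum_error _ _ N_gt0 G_is_derive h_is_derive_L h'_le) _.
have N_gt0R : 0 < N%:R :> R by rewrite ltr0n.
rewrite ler_pdivrMr // in NK.
by rewrite ler_pdivrMr // [e * _]mulrC.
Unshelve. all: by end_near.
Qed.

End CompactlySupportedC1.

Lemma esum_lattice_riemann_sum {R : realType} (F : R -> R) (L N : nat) :
  (0 < N)%N -> (forall x, 0 <= F x) -> (forall x, L%:R <= `|x| -> F x = 0) ->
  (\esum_(k in [set: int]) (N%:R^-1 * F (k%:~R / N%:R))%:E)%E =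
  (riemann_sum L N F)%:E.
Proof.
move=> N_gt0 F_ge0 F_eq0; have N_gt0R : 0 < N%:R :> R by rewrite ltr0n.
set a := fun k : int => (N%:R^-1 * F (k%:~R / N%:R))%:E.
pose index (i : nat) : int := i%:Z - (L * N)%:Z.
have a_eq0 k : ~ (index @` `I_(2 * L * N)) k -> a k = 0%E.
  move=> kNgrid; rewrite /a; have [Lk|kL] := lerP L%:R `|k%:~R / N%:R :> R|.
    by rewrite F_eq0 // mulr0.
  exfalso; apply: kNgrid.
  rewrite normrM normfV (ger0_norm (ltW N_gt0R)) ltr_pdivrMr // -natrM -intr_norm in kL.
  have {}kL : (`|k| < (L * N)%:Z)%R by rewrite -(ltr_int R).
  by exists (absz (k + (L * N)%:Z)); rewrite /index /=; lia.
rewrite (_ : \esum_(k in _) a k = \esum_(k in index @` `I_(2 * L * N)) a k)%E.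
  rewrite esum_fset; last 2 first.
  - exact/finite_image/finite_II.
  - by move=> k _; rewrite lee_fin mulr_ge0 // invr_ge0 ltW.
  rewrite fsbig_image; last first.
    by move=> i j _ _ /eqP; rewrite /index subr_eq addrNK => /eqP [].
  rewrite -fsbig_ord sumEFin; congr EFin; apply: eq_bigr => i _.
  rewrite /index /grid_point intrD intrN -!pmulrn natrM mulrDl mulNr mulfK //.
  by rewrite gt_eqF.
rewrite [RHS]esum_mkcond; apply: eq_esum => k _.
by case: ifPn => // /negP; rewrite inE => /a_eq0.
Qed.

Lemma riemann_sum_eq_off0 {R : realType} (F H : R -> R) (L N : nat) :
  (0 < L)%N -> (0 < N)%N -> (forall x, x != 0 -> F x = H x) ->
  riemann_sum L N F = riemann_sum L N H + N%:R^-1 * (F 0 - H 0).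
Proof.
move=> L_gt0 N_gt0 FH; have N_neq0 : N%:R != 0 :> R by rewrite pnatr_eq0 -lt0n.
have i0_lt : (L * N < 2 * L * N)%N by rewrite -mulnA ltn_Pmull // muln_gt0 L_gt0.
pose i0 : 'I_(2 * L * N) := Ordinal i0_lt.
have grid_i0 : grid_point L N i0 = 0 :> R by rewrite /grid_point natrM mulfK // subrr.
rewrite /riemann_sum (bigD1 i0) // [in RHS](bigD1 i0) //= grid_i0.
rewrite (eq_bigr (fun i : 'I__ => N%:R^-1 * H (grid_point L N i))); first by ring.
move=> i i_neq0; rewrite FH // /grid_point subr_eq0; apply: contra i_neq0 => /eqP iL.
apply/eqP/val_inj => /=; apply/eqP; rewrite -(eqr_nat R) natrM -iL divfK //.
Qed.

Lemma integral_eq_off_point {R : realType} (F H : R -> R) (a : R) :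
  measurable_fun [set: R] H -> (forall x, x != a -> F x = H x) ->
  (\int[@lebesgue_measure R]_(x in [set: R]) (F x)%:E =
   \int[@lebesgue_measure R]_(x in [set: R]) (H x)%:E)%E.
Proof.
move=> mH FH.
have mTa : measurable ([set: R] `\ a) by apply: measurableD => //; exact: measurable_set1.
have FH_off x : ([set: R] `\ a) x -> F x = H x by move=> [_ /eqP]; exact: FH.
have mH_off : measurable_fun ([set: R] `\ a) H by exact: measurable_funS mH.
rewrite -(@integral_setD1 _ (fun x => (F x)%:E) a) //.
rewrite -(@integral_setD1 _ (fun x => (H x)%:E) a) //.
- by apply: eq_integral => x /[1!inE] /FH_off ->.
- exact/measurable_realfun.measurable_EFinP.
- apply/measurable_realfun.measurable_EFinP.
  by apply: eq_measurable_fun mH_off => x /[1!inE] /FH_off.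
Qed.

Lemma is_derive_sqr {R : realType} (f : R -> R) (x df : R) :
  is_derive x 1 f df -> is_derive x 1 (fun y => f y ^+ 2) (2 * f x * df).
Proof.
move=> fd; have := is_deriveX 2 fd.
have -> : f ^+ 2 = (fun y => f y ^+ 2) by apply/funext => y; rewrite /= expr2.
by rewrite /= expr1.
Qed.

Section Smooth.
Context {R : realType} (g : R -> R).
Hypothesis g_smooth : smooth g.

Lemma smooth_is_derive (x : R) : is_derive x 1 g (derive1 g x).
Proof. by have := derivableP (g_smooth 0 x); rewrite /= -derive1E. Qed.

Lemma smooth_continuous : continuous g.
Proof. exact: is_derive_continuous smooth_is_derive. Qed.

Lemma smooth_derive1_continuous : continuous (derive1 g).
Proof. by move=> x; apply: derivable1_continuous (g_smooth 1 x). Qed.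

End Smooth.

Lemma in_C_decomp {R : realType} {f : R -> R} : in_C f ->
  exists g (L : nat), [/\ smooth g, (0 < L)%N,
    forall x, L%:R <= `|x| -> g x = 0 & forall x, x != 0 -> f x = g x].
Proof.
case=> g [lam [g_smooth [[M gM] ->]]].
exists g, (Num.bound `|M|).+1; split => // [x Lx|x x_neq0].
  apply: gM; apply: le_lt_trans (ler_norm M) _; apply: lt_le_trans Lx.
  by apply: lt_le_trans (archi_boundP _) _; rewrite ?ler_nat.
by rewrite indicE memNset ?mulr0 ?addr0 //= => /eqP; apply/negP.
Qed.

Section SmoothPlusDirac.
Context {R : realType} (gamma : R) {f g : R -> R} {L : nat}.
Hypothesis g_smooth : smooth g.
Hypothesis L_gt0 : (0 < L)%N.
Hypothesis g_eq0 : forall x, L%:R <= `|x| -> g x = 0.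
Hypothesis fg : forall x, x != 0 -> f x = g x.

Local Notation mu := (@lebesgue_measure R).

Let h x := g x ^+ 2.
Let h' x := 2 * g x * derive1 g x.

Let h_is_derive (x : R) : is_derive x 1 h (h' x).
Proof. exact/is_derive_sqr/smooth_is_derive. Qed.

Let h'_continuous : continuous h'.
Proof.
move=> x; apply: (continuousM (s := fun x => 2 * g x)).
  by apply: (continuousM (s := fun _ => 2)); [exact: cvg_cst | exact: smooth_continuous].
exact: smooth_derive1_continuous.
Qed.

Let h_eq0 x : L%:R <= `|x| -> h x = 0.
Proof. by move=> /g_eq0; rewrite /h => ->; rewrite expr0n. Qed.

Lemma norm_sbm_smooth_plus_dirac :
  norm_sbm gamma f = Num.sqrt (Rintegral mu [set: R] h + Num.sqrt 2 * gamma * f 0 ^+ 2).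
Proof.
rewrite /norm_sbm /sq_norm_sbm (@integral_eq_off_point _ _ h 0).
- by rewrite (integralT_Rintegral h_is_derive h_eq0) -EFinD.
- exact: measurable_realfun.continuous_measurable_fun (is_derive_continuous h_is_derive).
- by move=> x /fg ->.
Qed.

Lemma norm_sip_smooth_plus_dirac N : (0 < N)%N ->
  norm_sip gamma N f = Num.sqrt (riemann_sum L N h + N%:R^-1 * (f 0 ^+ 2 - h 0)
                                 + Num.sqrt 2 * gamma * f 0 ^+ 2).
Proof.
move=> N_gt0; have f_sqr_eq0 x : L%:R <= `|x| -> f x ^+ 2 = 0.
  move=> Lx; have x_neq0 : x != 0.
    by apply: contraTneq Lx => ->; rewrite normr0 -ltNge ltr0n.
  by rewrite fg // g_eq0 // expr0n.
rewrite /norm_sip /sq_norm_sip (@esum_lattice_riemann_sum _ (fun x => f x ^+ 2) L) //.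
  by rewrite -EFinD /= (@riemann_sum_eq_off0 _ (fun x => f x ^+ 2) h) // => x /fg ->.
by move=> x; exact: sqr_ge0.
Qed.

Lemma riemann_sum_sqr_cvg :
  (fun N : nat => riemann_sum L N h) @ \oo --> Rintegral mu [set: R] h.
Proof. exact: riemann_sum_cvg h_is_derive h'_continuous h_eq0. Qed.

End SmoothPlusDirac.

Theorem proposition5p5 (R : realType) (gamma : R) (hgamma : 0 < gamma)
  (f : R -> R) (hf : in_C f) :
  (fun N : nat => norm_sip gamma N f) @ \oo --> norm_sbm gamma f.
Proof.
have [g [L [g_smooth L_gt0 g_eq0 fg]]] := in_C_decomp hf.
set c := Num.sqrt 2 * gamma * f 0 ^+ 2; set d := f 0 ^+ 2 - g 0 ^+ 2.
have sipE : \forall N \near \oo,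
    Num.sqrt (riemann_sum L N (fun x => g x ^+ 2) + N%:R^-1 * d + c) = norm_sip gamma N f.
  near=> N; rewrite (norm_sip_smooth_plus_dirac gamma L_gt0 g_eq0 fg) //.
  by near: N; exact: nbhs_infty_gt.
rewrite (norm_sbm_smooth_plus_dirac gamma g_smooth g_eq0 fg).
apply: cvg_trans (near_eq_cvg sipE) _.
apply: continuous_cvg; first exact: sqrt_continuous.
rewrite -[X in _ --> X + c]addr0; apply: cvgD; last exact: cvg_cst.
apply: cvgD; first exact: riemann_sum_sqr_cvg g_smooth g_eq0.
rewrite -[X in _ --> X](mul0r d); apply: cvgM; last exact: cvg_cst.
by rewrite -cvg_shiftS; exact: cvg_harmonic.
Unshelve. all: by end_near.
Qed.
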